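(* Consider the data sharing game with participants $N=\{1,\dots,n\}$ and a server $0$ with budget $b_0\ge 0$, in which every participant inputs its true dataset, and let $w$ be the associated characteristic function $$w(S)=\sum_{i\in S} v_i(F(D_S),D_i)+b_0 \quad (\emptyset\neq S\subseteq N),\qquad w(\emptyset)=0 .$$ Suppose that the global model trained on all data performs better than the model trained on any coalition, in the sense that for every nonempty $S\subseteq N$ and every $i\in S$, $v_i(F(D),D_i)\ge v_i(F(D_S),D_i)$. Then the core $$\mathrm{Core}(N)=\Big\{(\pi_0,\pi_1,\dots,\pi_n)\in\mathbb{R}^{n+1}_{+}\ :\ \sum_{i\in N}\pi_i+\pi_0=w(N),\ \ \sum_{i\in S}\pi_i+\pi_0\ge w(S)\ \text{for all } S\subseteq N\Big\}$$ is nonempty.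
   Context: Each participant $i\in N$ holds a dataset $D_i$; $D=\cup_{i\in N}D_i$ and, for $S\subseteq N$, $D_S=\{D_i\}_{i\in S}$. $F$ is a federated learning algorithm mapping a collection of datasets to a (global) model, $A(\cdot)$ is an accuracy metric of a model, and $h_i(\cdot)=k_iA(\cdot)$ with constant $k_i>0$. The valuation of participant $i$ (with original dataset $D_i$) for a model $M$ is $v_i(M,D_i)=\mathbb{E}\big[\max\{h_i(M)-h_i(F(D_i)),0\}\big]$, where the expectation is over the randomness of training/evaluation; in particular $v_i\ge 0$. *)

From mathcomp Require Import all_boot all_order all_algebra.
Set Implicit Arguments. Unset Strict Implicit. Unset Printing Implicit Defensive.
Import Order.TTheory GRing.Theory Num.Theory.
Local Open Scope ring_scope.

(* Participants N = {1..n} are modelled by 'I_n; coalitions S ⊆ N by {set 'I_n}.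
   Model : the type of (global) models;  F S : the model F(D_S) trained on D_S;
   v i M : the valuation v_i(M, D_i) of participant i for model M. *)

Definition dsg_w (R : numDomainType) (n : nat) (Model : Type)
  (F : {set 'I_n} -> Model) (v : 'I_n -> Model -> R) (b0 : R)
  (S : {set 'I_n}) : R :=
  if S == set0 then 0 else \sum_(i in S) v i (F S) + b0.

Definition in_core (R : numDomainType) (n : nat) (Model : Type)
  (F : {set 'I_n} -> Model) (v : 'I_n -> Model -> R) (b0 : R)
  (pi0 : R) (pi : 'I_n -> R) : Prop :=
  [/\ 0 <= pi0, (forall i, 0 <= pi i),
      \sum_(i < n) pi i + pi0 = dsg_w F v b0 setT &
      forall S : {set 'I_n}, dsg_w F v b0 S <= \sum_(i in S) pi i + pi0].

From mathcomp Require Import all_boot all_order all_algebra.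
Import Order.TTheory GRing.Theory Num.Theory.
Set Implicit Arguments. Unset Strict Implicit. Unset Printing Implicit Defensive.
Local Open Scope ring_scope.

(* Paying every participant its value for the global model F(D) and the server
   its budget b0 is in the core: efficiency holds by the definition of w(N), and
   a coalition S can only claim the values of the worse model F(D_S) plus b0.
   When n = 0 the server must get 0 instead, since then N = set0 and w(N) = 0. *)

Section DataSharingGame.

Variables (R : numDomainType) (n : nat) (Model : Type).
Variables (F : {set 'I_n} -> Model) (v : 'I_n -> Model -> R) (b0 : R).

Notation w := (dsg_w F v b0).

Definition grand_payoff (i : 'I_n) : R := v i (F setT).

Lemma dsg_w_set0 : w set0 = 0.
Proof. by rewrite /dsg_w eqxx. Qed.

Lemma dsg_w_neq0 (S : {set 'I_n}) :
  S != set0 -> w S = \sum_(i in S) v i (F S) + b0.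
Proof. by rewrite /dsg_w => /negPf ->. Qed.

Hypothesis v_ge0 : forall i M, 0 <= v i M.
Hypothesis b0_ge0 : 0 <= b0.

Lemma in_core_empty_game :
  [set: 'I_n] = set0 -> in_core F v b0 0 grand_payoff.
Proof.
move=> NT0; have all_set0 (S : {set 'I_n}) : S = set0.
  by apply/eqP; rewrite -subset0 -NT0 subsetT.
split=> // [i | | S]; first exact: v_ge0.
  rewrite NT0 dsg_w_set0 addr0 big1 // => i _.
  by have := in_setT i; rewrite NT0 inE.
by rewrite (all_set0 S) dsg_w_set0 big_set0 add0r.
Qed.

Hypothesis global_best : forall S : {set 'I_n}, S != set0 ->
  forall i, i \in S -> v i (F S) <= v i (F setT).

Lemma in_core_grand_payoff :
  [set: 'I_n] != set0 -> in_core F v b0 b0 grand_payoff.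
Proof.
move=> NTn0; split=> // [i | | S]; first exact: v_ge0.
  by rewrite dsg_w_neq0 //; congr (_ + _); apply: eq_bigl => i; rewrite inE.
have [-> | Sn0] := eqVneq S set0.
  by rewrite dsg_w_set0 big_set0 add0r.
by rewrite dsg_w_neq0 // lerD2r; apply: ler_sum => i; apply: global_best.
Qed.

End DataSharingGame.

Theorem theorem2 (R : realFieldType) (n : nat) (Model : Type)
  (F : {set 'I_n} -> Model) (v : 'I_n -> Model -> R) (b0 : R)
  (hb0 : 0 <= b0)
  (hv : forall (i : 'I_n) (M : Model), 0 <= v i M)
  (hbest : forall S : {set 'I_n}, S != set0 ->
     forall i, i \in S -> v i (F S) <= v i (F setT)) :
  exists (pi0 : R) (pi : 'I_n -> R), in_core F v b0 pi0 pi.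
Proof.
have [NT0 | NTn0] := eqVneq [set: 'I_n] set0.
  by exists 0, (grand_payoff F v); exact: in_core_empty_game.
by exists b0, (grand_payoff F v); exact: in_core_grand_payoff.
Qed.
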